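(* Let $\mathbf A=(\mathbf a_1,\ldots,\mathbf a_m)^\top\in\mathbb R^{m\times d}$ and $\mathbf b=(b_1,\ldots,b_m)^\top\in\mathbb R^m$. Then the following are equivalent: (A) $(\mathbf A,\mathbf b)$ is affine phase retrievable for $\mathbb R^d$. (B) The map $\mathbf M^2_{\mathbf A,\mathbf b}$ is injective on $\mathbb R^d$. (C) For any $\mathbf u,\mathbf v\in\mathbb R^d$ with $\mathbf u\neq 0$, there exists $k$ with $1\le k\le m$ such that $\langle \mathbf a_k,\mathbf u\rangle(\langle \mathbf a_k,\mathbf v\rangle+b_k)\neq 0$. (D) For any $S\subset\{1,\ldots,m\}$, if $\mathbf b_S\in\mathrm{span}(\mathbf A_S)$ then $\mathrm{span}(\mathbf A_{S^c}^\top)=\mathrm{span}\{\mathbf a_j: j\in S^c\}=\mathbb R^d$. (E) The Jacobian $J(\mathbf x)$ of the map $\mathbf M^2_{\mathbf A,\mathbf b}$ has rank $d$ for all $\mathbf x\in\mathbb R^d$.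
   Context: For $\mathbf A=(\mathbf a_1,\ldots,\mathbf a_m)^\top$ and $\mathbf b$, define $\mathbf M_{\mathbf A,\mathbf b}(\mathbf x)=(|\langle\mathbf a_1,\mathbf x\rangle+b_1|,\ldots,|\langle\mathbf a_m,\mathbf x\rangle+b_m|)$ and $\mathbf M^2_{\mathbf A,\mathbf b}(\mathbf x)=(|\langle\mathbf a_1,\mathbf x\rangle+b_1|^2,\ldots,|\langle\mathbf a_m,\mathbf x\rangle+b_m|^2)$, where $\langle\cdot,\cdot\rangle$ is the standard inner product. $(\mathbf A,\mathbf b)$ is called affine phase retrievable for $\mathbb R^d$ if $\mathbf M_{\mathbf A,\mathbf b}$ is injective on $\mathbb R^d$. For $T\subset\{1,\ldots,m\}$, $\mathbf A_T=(\mathbf a_j:j\in T)^\top$ is the submatrix of rows indexed by $T$, $\mathbf b_T$ the subvector of entries indexed by $T$, $S^c$ the complement of $S$ in $\{1,\ldots,m\}$, and for a matrix $\mathbf B$, $\mathrm{span}(\mathbf B)$ is the span of its columns (so $\mathrm{span}(\mathbf A_T)\subset\mathbb R^{\#T}$). *)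

From HB Require Import structures.
From mathcomp Require Import all_boot all_order all_algebra.
From mathcomp Require Import all_classical all_reals all_analysis.
Set Implicit Arguments. Unset Strict Implicit. Unset Printing Implicit Defensive.
Import Order.TTheory GRing.Theory Num.Theory.
Import numFieldNormedType.Exports.
Local Open Scope ring_scope.

(* A : 'M_(m,d) has rows a_1..a_m; b : 'rV_m; points x : 'rV_d. *)
Definition affv (R : realType) (m d : nat) (A : 'M[R]_(m, d)) (b : 'rV[R]_m)
  (x : 'rV[R]_d) (k : 'I_m) : R :=
  \sum_(j < d) A k j * x 0 j + b 0 k.

Definition Mab (R : realType) (m d : nat) (A : 'M[R]_(m, d)) (b : 'rV[R]_m)
  (x : 'rV[R]_d) : 'rV[R]_m := \row_k `|affv A b x k|.

Definition M2ab (R : realType) (m d : nat) (A : 'M[R]_(m, d)) (b : 'rV[R]_m)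
  (x : 'rV[R]_d) : 'rV[R]_m := \row_k (`|affv A b x k| ^+ 2).

Definition affine_phase_retrievable (R : realType) (m d : nat)
  (A : 'M[R]_(m, d)) (b : 'rV[R]_m) : Prop := injective (Mab A b).

From HB Require Import structures.
From mathcomp Require Import all_boot all_order all_algebra.
From mathcomp Require Import all_classical all_reals all_analysis.
From mathcomp Require Import ring.
Import Order.TTheory GRing.Theory Num.Theory.
Import numFieldNormedType.Exports.
Set Implicit Arguments. Unset Strict Implicit. Unset Printing Implicit Defensive.
Local Open Scope ring_scope.

(* Since |t| and |t|^2 determine each other, (A) <=> (B).  With x = v + u and
   y = v - u, a difference of squares gives
     (<a_k,x> + b_k)^2 - (<a_k,y> + b_k)^2 = 4 <a_k,u> (<a_k,v> + b_k),
   so M^2 identifies two points exactly when some u <> 0 and v make every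
   product <a_k,u> (<a_k,v> + b_k) vanish, i.e. when (C) fails.  The Jacobian
   of M^2 at v maps u to (2 (<a_k,v> + b_k) <a_k,u>)_k, so it has rank d iff no
   such u exists for this v: (C) <=> (E).  For (D), a bad pair (u, v) is the
   same as S = {k | <a_k,v> + b_k = 0}, for which b_S = A_S (-v), together with
   a nonzero u orthogonal to all a_j, j not in S. *)

Section Differential.
Context {R : numFieldType} {V W : normedModType R}.

Lemma is_diff_sum n (f df : 'I_n -> V -> W) x :
  (forall i, is_diff x (f i) (df i)) -> is_diff x (\sum_i f i) (\sum_i df i).
Proof.
move=> fdf; elim/big_ind2: _ => [|f1 df1 f2 df2 dfx1 dfx2|i _]; last exact: fdf.
- exact: (is_diff_cst (0 : W) x).
- exact: is_diffD dfx1 dfx2.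
Qed.

Lemma is_diffZl (k dk : V -> R) (w : W) x :
  is_diff x k dk -> is_diff x (fun z => k z *: w) (fun z => dk z *: w).
Proof.
move=> kdk; apply: DiffDef; first exact: differentiableZl.
by rewrite diffZl // diff_val.
Qed.

End Differential.

Lemma is_diff_coord (R : numFieldType) p q (i : 'I_p) (j : 'I_q) (M : 'M[R]_(p, q)) :
  is_diff M (fun N : 'M[R]_(p, q) => N i j) (fun N => N i j).
Proof.
have coord_lin : linear (fun N : 'M[R]_(p, q) => N i j : R^o).
  by move=> a N N'; rewrite !mxE.
pose coord : {linear _ -> R^o} :=
  HB.pack (fun N : 'M[R]_(p, q) => N i j : R^o)
    (GRing.isLinear.Build _ _ _ _ _ coord_lin).
apply: DiffDef; first exact: differentiable_coord.
by rewrite (diff_lin (f := coord)) //; exact: coord_continuous.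
Qed.

Lemma row_free_kerP (F : fieldType) p q (M : 'M[F]_(p, q)) :
  row_free M <-> (forall v : 'rV_p, v *m M = 0 -> v = 0).
Proof.
split=> [freeM v /eqP|]; last exact: inj_row_free.
by rewrite mulmx_free_eq0 // => /eqP.
Qed.

Section AffinePhaseRetrieval.
Variables (R : realType) (m d : nat) (A : 'M[R]_(m, d)) (b : 'rV[R]_m).

Definition linv (u : 'rV[R]_d) (k : 'I_m) : R := \sum_(j < d) A k j * u 0 j.

Lemma linvE u k : linv u k = (u *m A^T) 0 k.
Proof. by rewrite mxE; apply: eq_bigr => j _; rewrite mxE mulrC. Qed.

Lemma linvD u v k : linv (u + v) k = linv u k + linv v k.
Proof. by rewrite !linvE mulmxDl mxE. Qed.

Lemma linvN u k : linv (- u) k = - linv u k.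
Proof. by rewrite !linvE mulNmx mxE. Qed.

Lemma mulmx_col_linv (y : 'cV[R]_d) i : (A *m y) i 0 = linv y^T i.
Proof. by rewrite linvE -trmx_mul [RHS]mxE. Qed.

Lemma affvE x k : affv A b x k = linv x k + b 0 k.
Proof. by []. Qed.

Lemma affvDl u v k : affv A b (u + v) k = affv A b u k + linv v k.
Proof. by rewrite !affvE linvD addrAC. Qed.

Lemma affv_sqrB u v k :
  affv A b (v + u) k ^+ 2 - affv A b (v - u) k ^+ 2 = 4 * (linv u k * affv A b v k).
Proof. by rewrite !affvDl linvN; ring. Qed.

Definition lin_affine_separating := forall u v : 'rV[R]_d, u != 0 ->
  exists k, linv u k * affv A b v k != 0.

Lemma lin_affine_separatingP : lin_affine_separating <->
  (forall u v, (forall k, linv u k * affv A b v k = 0) -> u = 0).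
Proof.
split=> [sep u v uv0 | sep u v].
  by apply/eqP; apply: contraT => /(sep u v)[k]; rewrite uv0 eqxx.
move=> /eqP u0; apply: contra_notP u0 => nex; apply: (sep u v) => k.
by apply/eqP; apply: contra_notT nex => ?; exists k.
Qed.

Lemma M2abE x k : M2ab A b x 0 k = affv A b x k ^+ 2.
Proof. by rewrite mxE real_normK ?num_real. Qed.

Lemma Mab_eq_M2ab x y : Mab A b x = Mab A b y <-> M2ab A b x = M2ab A b y.
Proof.
split=> [/rowP e|/rowP e]; apply/rowP => k.
  by rewrite !mxE; have := e k; rewrite !mxE => ->.
by apply/eqP; have := e k; rewrite !mxE => /eqP; rewrite eqrXn2.
Qed.

Lemma affine_phase_retrievable_M2ab :
  affine_phase_retrievable A b <-> injective (M2ab A b).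
Proof. by split=> inj x y /Mab_eq_M2ab /inj. Qed.

Lemma injective_M2ab_separating :
  injective (M2ab A b) <-> lin_affine_separating.
Proof.
split=> [inj | /lin_affine_separatingP sep x y e].
  apply/lin_affine_separatingP => u v uv0.
  have /inj/addrI/eqP : M2ab A b (v + u) = M2ab A b (v - u).
    apply/rowP => k; rewrite !M2abE; apply/eqP.
    by rewrite -subr_eq0 affv_sqrB uv0 mulr0.
  by rewrite -subr_eq0 opprK -mulr2n -scaler_nat scaler_eq0 pnatr_eq0 => /eqP.
pose v := 2^-1 *: (x + y); pose u := 2^-1 *: (x - y).
have [xE yE] : x = v + u /\ y = v - u.
  by split; apply/rowP => j; rewrite !mxE; field.
suff u0 : u = 0 by rewrite xE yE u0 addr0 subr0.
apply: (sep u v) => k; apply/eqP.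
have := affv_sqrB u v k; rewrite -xE -yE -!M2abE e subrr.
by move/esym/eqP; rewrite mulf_eq0 pnatr_eq0.
Qed.

Lemma is_diff_linv x k : is_diff x (linv ^~ k) (linv ^~ k).
Proof.
have -> : linv ^~ k = \sum_j (A k j *: (fun y : 'rV[R]_d => y 0 j)).
  by apply/funext => y; rewrite fct_sumE.
by apply: is_diff_sum => j; apply: is_diffZ; exact: is_diff_coord.
Qed.

Lemma is_diff_affv x k : is_diff x (affv A b ^~ k) (linv ^~ k).
Proof.
have -> : affv A b ^~ k = linv ^~ k + cst (b 0 k) by [].
by apply: is_diff_eq (is_diffD (is_diff_linv x k) (is_diff_cst _ _)) _; rewrite addr0.
Qed.

Lemma is_diff_M2ab x :
  is_diff x (M2ab A b) (fun h => \row_k (2 * affv A b x k * linv h k)).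
Proof.
have row_sum (f : 'I_m -> 'rV[R]_d -> R) :
    (fun y => \row_k f k y) = \sum_k (fun y => f k y *: delta_mx 0 k).
  apply/funext => y; rewrite fct_sumE [LHS]row_sum_delta.
  by apply: eq_bigr => k _; rewrite mxE.
have -> : M2ab A b = fun y => \row_k (affv A b y k ^+ 2).
  by apply/funext => y; apply/rowP => k; rewrite M2abE mxE.
rewrite !row_sum; apply: is_diff_sum => k; apply: is_diffZl.
have := is_diffX 1 (is_diff_affv x k); rewrite exprfctE => /is_diff_eq; apply.
by apply/funext => h; rewrite expr1.
Qed.

Lemma mul_jacobian_M2ab x h :
  h *m jacobian (M2ab A b) x = \row_k (2 * affv A b x k * linv h k).
Proof.
by rewrite /jacobian mul_rV_lin1 (@diff_val _ _ _ _ _ _ _ (is_diff_M2ab x)).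
Qed.

Lemma separating_full_rank_jacobian :
  lin_affine_separating <-> forall x, \rank (jacobian (M2ab A b) x) = d.
Proof.
apply: iff_trans lin_affine_separatingP _.
split=> [sep x | fullJ u v uv0].
  apply/eqP/row_free_kerP => h; rewrite mul_jacobian_M2ab => /rowP J0.
  apply: (sep h x) => k; apply/eqP; have := J0 k; rewrite !mxE -mulrA.
  by move/eqP; rewrite mulf_eq0 pnatr_eq0 mulrC.
have /eqP/row_free_kerP := fullJ v; apply; rewrite mul_jacobian_M2ab.
by apply/rowP => k; rewrite !mxE -mulrA [affv _ _ _ _ * _]mulrC uv0 mulr0.
Qed.

(* A_{S^c} padded with zero rows, so that its row space is span {a_j | j \notin S}. *)
Definition zero_rows (S : {set 'I_m}) : 'M[R]_(m, d) :=
  \matrix_i (if i \in S then 0 else row i A).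

Lemma mul_zero_rows_tr S u k :
  (u *m (zero_rows S)^T) 0 k = if k \in S then 0 else linv u k.
Proof.
rewrite mxE; case: ifP => kS.
  by apply: big1 => j _; rewrite !mxE kS mxE mulr0.
by apply: eq_bigr => j _; rewrite !mxE kS !mxE mulrC.
Qed.

Lemma affv_opp_tr_eq0 (y : 'cV[R]_d) i :
  (affv A b (- y^T) i == 0) = (b 0 i == (A *m y) i 0).
Proof. by rewrite affvE linvN -mulmx_col_linv addrC subr_eq0. Qed.

Lemma separating_row_full_zero_rows : lin_affine_separating <->
  (forall S : {set 'I_m},
     (exists y : 'cV[R]_d, forall i, i \in S -> b 0 i = (A *m y) i 0) ->
     row_full (zero_rows S)).
Proof.
apply: iff_trans lin_affine_separatingP _.
split=> [sep S [y bS] | full u v uv0].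
  rewrite /row_full -mxrank_tr; apply/row_free_kerP => u /rowP uS0.
  apply: (sep u (- y^T)) => k; have := uS0 k.
  rewrite mul_zero_rows_tr mxE; case: ifP => [kS _ | _ ->]; last exact: mul0r.
  by have /eqP := bS k kS; rewrite -affv_opp_tr_eq0 => /eqP ->; rewrite mulr0.
pose S := [set k | affv A b v k == 0].
have : row_full (zero_rows S).
  apply: full; exists (- v^T) => i; rewrite inE => vi0; apply/eqP.
  by rewrite -affv_opp_tr_eq0 linearN /= trmxK opprK.
rewrite /row_full -mxrank_tr => /row_free_kerP; apply; apply/rowP => k.
rewrite mul_zero_rows_tr mxE inE; case: ifP => // /negbT vk0.
by have /eqP := uv0 k; rewrite mulf_eq0 (negbTE vk0) orbF => /eqP.
Qed.

End AffinePhaseRetrieval.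

Theorem theorem2p1 (R : realType) (m d : nat) (A : 'M[R]_(m, d)) (b : 'rV[R]_m) :
  [/\ (affine_phase_retrievable A b <-> injective (M2ab A b)),
      (affine_phase_retrievable A b <->
        (forall u v : 'rV[R]_d, u != 0 ->
           exists k : 'I_m, (\sum_(j < d) A k j * u 0 j) * affv A b v k != 0)),
      (affine_phase_retrievable A b <->
        (forall S : {set 'I_m},
           (exists y : 'cV[R]_d, forall i, i \in S -> b 0 i = (A *m y) i 0) ->
           row_full (\matrix_(i < m) (if i \in S then 0 else row i A))))
    & (affine_phase_retrievable A b <->
        (forall x : 'rV[R]_d, \rank (jacobian (M2ab A b) x) = d))].
Proof.
have AB := affine_phase_retrievable_M2ab A b.
have AC := iff_trans AB (injective_M2ab_separating A b).
split=> //.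
- exact: iff_trans AC (separating_row_full_zero_rows A b).
- exact: iff_trans AC (separating_full_rank_jacobian A b).
Qed.
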